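(* Let $P'=(P_1,\dots,P_m,0,\dots,0)$ and $Q'=(0,\dots,0)$ (both of length $m+n$) and $K:=L^{\mathrm{skew}}_{A_{m+n-1}}(P'/Q')$, the latter encoded by arrays $(g'_{k,l})_{0\le k\le m+n,\ l\in C'_k}$ with $C'_k:=\{k-(m+n-1),\dots,k\}$ (the construction below with $m+n$ in place of both $m$ and $n$), and with its own edge coefficients $X',Y'$ given by the same formulas. For $x\in L:=L^{\mathrm{skew}}_{A_{n-1}}(P/Q)$ with array $(g_{i,j}(x))$, define the array $\phi(x)$ by: $g'_{k,l}(\phi(x)):=0$ if $l\le 0$; $:=g_{0,l-m}(x)$ if $1\le k\le m-1$, $1\le l\le k$; $:=0$ if $m+1\le k\le m+n$, $1\le l\le k-m$; $:=g_{k-m,l-m}(x)$ if $m\le k\le m+n$, $k-m+1\le l\le k$. Then: $\phi(x)$ is the array of an element of $K$, and $\phi:L\to K$ is injective; $S\xrightarrow{i}T$ in $L$ iff $\phi(S)\xrightarrow{i+m}\phi(T)$ in $K$; $\phi(L)$ equals the $J$-component of $\phi(M)$ in $K$, where $J=\{m+1,\dots,m+n-1\}$ and $M$ is the maximum of $L$; $m_{i+m}(\phi(x))=m_i(x)$ for all $x\in L$ and $1\le i\le n-1$ (weights computed in $K$ and $L$ respectively); and for every edge $S\xrightarrow{i}T$ of $L$, $X'_{\phi(T),\phi(S)}=X_{T,S}$ and $Y'_{\phi(S),\phi(T)}=Y_{S,T}$.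
   Context: Fix integers $m\ge n\ge 2$ and weakly decreasing $m$-tuples of nonnegative integers $P=(P_1,\dots,P_m)$ and $Q=(Q_1,\dots,Q_m)$ with $Q_r\le P_r$ for all $r$. The skew shape $P/Q$ is the set of cells $(r,c)$ (row $r$, column $c$, matrix convention) with $Q_r<c\le P_r$; assume no column of $P/Q$ contains more than $n$ cells. $L^{\mathrm{skew}}_{A_{n-1}}(P/Q)$ is the set of semistandard tableaux $T$ of shape $P/Q$ with entries in $\{1,\dots,n\}$ (entries weakly increase left to right along rows and strictly increase top to bottom down columns), partially ordered by $S\le T$ iff $S_{r,c}\ge T_{r,c}$ for every cell $(r,c)$. The Hasse diagram edges are colored: $S\to T$ is a covering iff $S,T$ differ in exactly one cell $(r,c)$ and $S_{r,c}=T_{r,c}+1$; this edge gets color $i:=T_{r,c}\in\{1,\dots,n-1\}$, written $S\xrightarrow{i}T$. GT parallelograms: for $0\le i\le n$ put $C_i:=\{i-(m-1),\dots,i-1,i\}$. To each tableau $T$ associate the integer array $(g_{i,j}(T))_{0\le i\le n,\,j\in C_i}$ defined by $g_{i,i+1-r}(T):=Q_r+|\{c:(r,c)\in P/Q,\ T_{r,c}\le i\}|$ for $1\le r\le m$. (Thus $g_{0,j}=Q_{1-j}$, $g_{n,j}=P_{n+1-j}$, and these are exactly the integer arrays with these boundary columns satisfying $\max(g_{i-1,j-1},g_{i+1,j})\le g_{i,j}\le\min(g_{i-1,j},g_{i+1,j+1})$, undefined terms ignored.) One has $S\xrightarrow{i}T$ iff the arrays of $S$ and $T$ agree except at exactly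 one position $(i,j)$, where $g_{i,j}(T)=g_{i,j}(S)+1$. Edge coefficients: for an edge $S\xrightarrow{i}T$ with differing position $(i,j)$, writing $g_{p,q}:=g_{p,q}(T)$, $$X_{T,S}:=-\frac{\prod_{k\in C_{i+1}}(g_{i,j}-g_{i+1,k}+j-k)}{\prod_{k\in C_i\setminus\{j\}}(g_{i,j}-g_{i,k}+j-k-1)},\qquad Y_{S,T}:=\frac{\prod_{k\in C_{i-1}}(g_{i,j}-g_{i-1,k}+j-k-1)}{\prod_{k\in C_i\setminus\{j\}}(g_{i,j}-g_{i,k}+j-k)}.$$ Components and weights on colored posets: for a set $J$ of colors, the $J$-component of $t$ is the set of elements reachable from $t$ by undirected paths using only edges with colors in $J$. For a single color $i$, with $l_i(t)$ the length of the $i$-component of $t$ and $\rho_i(t)$ the rank of $t$ in it, $m_i(t):=2\rho_i(t)-l_i(t)$. *)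

From HB Require Import structures.
From mathcomp Require Import all_boot all_order all_algebra.
From Stdlib Require Import ClassicalEpsilon.
Set Implicit Arguments. Unset Strict Implicit. Unset Printing Implicit Defensive.
Import Order.TTheory GRing.Theory Num.Theory.

(* A tableau: entry in row r, column c (both 1-based, matrix convention).
   Outside the cells of the shape the entry is normalised to 0, so that
   tableaux of a given shape are determined by their entries on the cells. *)
Definition tab := nat -> nat -> nat.

Definition cell (N : nat) (P Q : nat -> nat) (r c : nat) : bool :=
  (1 <= r <= N) && (Q r < c <= P r).

Definition ssyt (N nc : nat) (P Q : nat -> nat) (T : tab) : Prop :=
  [/\ (forall r c, ~~ cell N P Q r c -> T r c = 0),
      (forall r c, cell N P Q r c -> 1 <= T r c <= nc),
      (forall r c c', cell N P Q r c -> cell N P Q r c' -> c <= c' -> T r c <= T r c')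
    & (forall r r' c, cell N P Q r c -> cell N P Q r' c -> r < r' -> T r c < T r' c)].

Definition tle (N : nat) (P Q : nat -> nat) (S T : tab) : Prop :=
  forall r c, cell N P Q r c -> T r c <= S r c.

Definition edge (N nc : nat) (P Q : nat -> nat) (S : tab) (i : nat) (T : tab) : Prop :=
  [/\ ssyt N nc P Q S, ssyt N nc P Q T &
      exists r c, [/\ cell N P Q r c, S r c = (T r c).+1, i = T r c &
        forall r' c', cell N P Q r' c' -> (r', c') <> (r, c) -> S r' c' = T r' c']].

Inductive jcomp (E : tab -> nat -> tab -> Prop) (J : pred nat) (t : tab) : tab -> Prop :=
  | comp_refl : jcomp E J t t
  | comp_step u v i : jcomp E J t u -> J i -> (E u i v \/ E v i u) -> jcomp E J t v.

Inductive dpath (E : tab -> nat -> tab -> Prop) (i : nat) : nat -> tab -> tab -> Prop :=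
  | dpath0 a : dpath E i 0 a a
  | dpathS k a b c : dpath E i k a b -> E b i c -> dpath E i k.+1 a c.

(* the maximum of a set of naturals (0 if it has none) *)
Definition natmax (Pk : nat -> Prop) : nat :=
  epsilon (inhabits 0%N) (fun k => Pk k /\ forall k', Pk k' -> (k' <= k)%N).

Definition rho (E : tab -> nat -> tab -> Prop) (i : nat) (t : tab) : nat :=
  natmax (fun k => exists a, dpath E i k a t).
Definition len (E : tab -> nat -> tab -> Prop) (i : nat) (t : tab) : nat :=
  natmax (fun k => exists a b, jcomp E (pred1 i) t a /\ dpath E i k a b).
Definition weight (E : tab -> nat -> tab -> Prop) (i : nat) (t : tab) : int :=
  (2 * (rho E i t)%:Z - (len E i t)%:Z)%R.

Local Open Scope ring_scope.

Definition garr (N : nat) (P Q : nat -> nat) (T : tab) (p : nat) (j : int) : int :=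
  let rz := (p%:Z + 1 - j)%R in
  let r := `|rz|%N in
  if (0 < rz) && (r <= N)%N then
    ((Q r + count (fun c => T r c <= p) (iota (Q r).+1 (P r - Q r)))%N)%:Z
  else 0.

Definition Cset (N p : nat) : seq int := [seq p%:Z - t%:Z | t <- iota 0 N].

Definition diffpos (N : nat) (gS gT : nat -> int -> int) (i : nat) (j : int) : Prop :=
  [/\ j \in Cset N i, gT i j = gS i j + 1 &
      forall p q, (p, q) <> (i, j) -> gS p q = gT p q].

(* X_{T,S} for an edge S --i--> T with differing position (i,j), g = g(T) *)
Definition Xcoef (N : nat) (g : nat -> int -> int) (i : nat) (j : int) : rat :=
  - (\prod_(k <- Cset N i.+1) ((g i j - g i.+1 k + j - k)%:~R : rat))
  / (\prod_(k <- Cset N i | k != j) ((g i j - g i k + j - k - 1)%:~R : rat)).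

(* Y_{S,T} for an edge S --i--> T with differing position (i,j), g = g(T) *)
Definition Ycoef (N : nat) (g : nat -> int -> int) (i : nat) (j : int) : rat :=
  (\prod_(k <- Cset N i.-1) ((g i j - g i.-1 k + j - k - 1)%:~R : rat))
  / (\prod_(k <- Cset N i | k != j) ((g i j - g i k + j - k)%:~R : rat)).

Definition phiarr (m n : nat) (g : nat -> int -> int) (k : nat) (l : int) : int :=
  if l <= 0 then 0
  else if (1 <= k <= m.-1)%N && (l <= k%:Z) then g 0%N (l - m%:Z)
  else if (m.+1 <= k <= m + n)%N && (l <= k%:Z - m%:Z) then 0
  else if (m <= k <= m + n)%N && (k%:Z - m%:Z + 1 <= l <= k%:Z) then g (k - m)%N (l - m%:Z)
  else 0.

(* phi is realised by embed x, which fills the inner shape Q with its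
   canonical semistandard filling (entries <= m, see fill) and puts x + m on
   P/Q.  Its GT array is phi(g(x)) (embed_garr) and a semistandard tableau is
   determined by its GT array (ssyt_garr_inj), so any phi as in the statement
   is embed on L.  Then: edges of L are the edges of K between images
   (edge_embed), and edges of K of colour > m never leave the image
   (high_edge_image), so i-chains and i-components correspond and the
   weights agree (weight_embed); L is connected to its maximum by descending
   edges (jcomp_max), so the image is a component (image_component); row
   i + m of phi(g) is row i of g shifted by m and padded with n zeros, which
   give equal nonzero factors above and below in X and Y (coef_embed). *)

From HB Require Import structures.
From mathcomp Require Import all_boot all_order all_algebra.
From mathcomp Require Import zify.
From Stdlib Require Import FunctionalExtensionality PropExtensionality Classical.
Import Order.TTheory GRing.Theory Num.Theory.

Lemma count_prefix (p : pred nat) a len :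
  (forall t t', a <= t' <= t -> t < a + len -> p t -> p t') ->
  forall t, a <= t < a + len -> p t = (t < a + count p (iota a len)).
Proof.
elim: len a => [|len IH] a Hdown t Ht; first by lia.
have IH' : forall u, a.+1 <= u < a.+1 + len -> p u = (u < a.+1 + count p (iota a.+1 len)).
  by apply: IH => u u' Hu Hu'; apply: Hdown; lia.
rewrite /=; case Hpa: (p a).
- case: (eqVneq t a) => [->|Hta]; first by rewrite Hpa; lia.
  by rewrite IH'; [rewrite add1n addSn addnS | lia].
- have Hnone : forall u, a <= u < a + len.+1 -> p u = false.
    move=> u Hu; apply/negbTE/negP => Hpu.
    by rewrite (Hdown u a) in Hpa => //; lia.
  rewrite add0n (Hnone t Ht) (@eq_in_count _ _ pred0) ?count_pred0; first by lia.
  by move=> u; rewrite mem_iota => Hu; apply: Hnone; lia.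
Qed.

Lemma count_iota_all (p : pred nat) a len :
  (forall t, a <= t < a + len -> p t) -> count p (iota a len) = len.
Proof.
move=> H; rewrite (@eq_in_count _ _ predT) ?count_predT ?size_iota //.
by move=> u; rewrite mem_iota => /H.
Qed.

Lemma count_iota_none (p : pred nat) a len :
  (forall t, a <= t < a + len -> ~~ p t) -> count p (iota a len) = 0.
Proof.
move=> H; rewrite (@eq_in_count _ _ pred0) ?count_pred0 //.
by move=> u; rewrite mem_iota => /H /negbTE.
Qed.

Lemma count_iota_le a b : a <= b -> count (fun c => c <= a) (iota 1 b) = a.
Proof.
move=> Hab; have -> : b = a + (b - a) by lia.
rewrite iotaD count_cat count_iota_all; last by move=> t; lia.
by rewrite count_iota_none ?addn0 // => t; lia.
Qed.

Lemma nonincr_le (m : nat) (Q : nat -> nat) :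
  (forall r, 1 <= r < m -> Q r.+1 <= Q r) ->
  forall a b, 1 <= a -> a <= b -> b <= m -> Q b <= Q a.
Proof.
move=> HQ a; elim=> [|b IH] Ha Hab Hbm; first by lia.
case: (eqVneq a b.+1) => [->//|Hne].
by apply: leq_trans (HQ b _) (IH Ha _ _); lia.
Qed.
Arguments nonincr_le {m Q}.

(* It is semistandard with entries in r..m, and its entries <= k (k < m)
   form the shape obtained by shifting Q up by m - k rows (fill_le). *)
Definition fill (m : nat) (Q : nat -> nat) (r c : nat) : nat :=
  r + count (fun s => Q s < c) (iota r.+1 (m - r)).

Lemma fill_bounds m Q r c : r <= fill m Q r c <= maxn m r.
Proof.
rewrite /fill; have := count_size (fun s => Q s < c) (iota r.+1 (m - r)).
rewrite size_iota; lia.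
Qed.

Lemma fill_mono m Q r c c' : c <= c' -> fill m Q r c <= fill m Q r c'.
Proof. by move=> H; rewrite /fill leq_add2l; apply: sub_count => s /=; lia. Qed.

Section Fill.
Variables (m : nat) (Q : nat -> nat).
Hypothesis HQ : forall r, 1 <= r < m -> Q r.+1 <= Q r.

Lemma fill_col r r' c : 1 <= r -> r < r' -> r' <= m -> c <= Q r' ->
  fill m Q r c < fill m Q r' c.
Proof.
move=> H1 H2 H3 H4; rewrite /fill.
have -> : m - r = (r' - r) + (m - r') by lia.
rewrite iotaD count_cat count_iota_none; last first.
  by move=> t Ht; have := nonincr_le HQ t r' ltac:(lia) ltac:(lia) H3; lia.
have -> : r.+1 + (r' - r) = r'.+1 by lia.
lia.
Qed.

Lemma fill_le r c k : 1 <= r <= m -> k < m ->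
  (fill m Q r c <= k) = (r <= k) && (c <= Q (r + m - k)).
Proof.
move=> Hr Hk; case: (leqP r k) => Hrk /=; last first.
  by apply/negbTE; have := fill_bounds m Q r c; lia.
set p := fun s => c <= Q s.
have Hcnt : count (fun s => Q s < c) (iota r.+1 (m - r)) =
            (m - r) - count p (iota r.+1 (m - r)).
  have := count_predC p (iota r.+1 (m - r)); rewrite size_iota.
  have -> : count (predC p) (iota r.+1 (m - r)) =
            count (fun s => Q s < c) (iota r.+1 (m - r)).
    by apply: eq_count => s; rewrite /= /p -ltnNge.
  lia.
have Hpre : p (r + m - k) = (r + m - k < r.+1 + count p (iota r.+1 (m - r))).
  apply: count_prefix; last by lia.
  by move=> t t' Ht Ht' Hq; apply: leq_trans Hq _; apply: (nonincr_le HQ); lia.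
rewrite /p in Hpre *; rewrite /fill Hcnt Hpre.
have := count_size p (iota r.+1 (m - r)); rewrite size_iota /p.
set A := count _ _ => HA.
by apply/idP/idP; lia.
Qed.
End Fill.
Arguments fill_col {m Q}.
Arguments fill_le {m Q}.

Lemma garrE N P Q T p r :
  garr N P Q T p (p%:Z + 1 - r%:Z)%R =
  if (0 < r) && (r <= N) then Posz (Q r + count (fun c => T r c <= p) (iota (Q r).+1 (P r - Q r)))
  else 0%R.
Proof.
by rewrite /garr; have -> : (p%:Z + 1 - (p%:Z + 1 - r%:Z))%R = Posz r by lia.
Qed.

Lemma garr_ge0 N P Q T p j : (0 <= garr N P Q T p j)%R.
Proof. by rewrite /garr; case: ifP. Qed.

Lemma CsetP N k l : l \in Cset N k -> exists2 r, 1 <= r <= N & l = (k%:Z + 1 - r%:Z)%R.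
Proof. by case/mapP=> t; rewrite mem_iota => Ht ->; exists t.+1; lia. Qed.
Arguments CsetP {N k l}.

Lemma CsetI N k r : 1 <= r <= N -> (k%:Z + 1 - r%:Z)%R \in Cset N k.
Proof. by move=> Hr; apply/mapP; exists r.-1; [rewrite mem_iota|]; lia. Qed.

(* In a row of a semistandard tableau the entries <= p form a prefix, so
   T r c <= p exactly when the column c is at most g_{p, p+1-r}. *)
Lemma ssyt_entry_le N nc P Q T r c p : ssyt N nc P Q T -> cell N P Q r c ->
  (T r c <= p) = (c%:Z <= garr N P Q T p (p%:Z + 1 - r%:Z))%R.
Proof.
case=> _ _ Hrow _ Hc; have := Hc; rewrite /cell => /andP[Hr Hcr].
rewrite garrE ifT; last by lia.
rewrite lez_nat (@count_prefix (fun c => T r c <= p) (Q r).+1 (P r - Q r)); first by lia.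
- by move=> t t' Ht Ht' /= Hle; apply: leq_trans Hle; apply: Hrow; rewrite /cell; lia.
- by lia.
Qed.
Arguments ssyt_entry_le {N nc P Q T r c} p.

Lemma ssyt_garr_inj N P Q T1 T2 : ssyt N N P Q T1 -> ssyt N N P Q T2 ->
  (forall k l, k <= N -> l \in Cset N k -> garr N P Q T1 k l = garr N P Q T2 k l) ->
  T1 = T2.
Proof.
move=> HT1 HT2 Hg.
apply: functional_extensionality => r; apply: functional_extensionality => c.
have [[Z1 B1 _ _] [Z2 B2 _ _]] := (HT1, HT2).
case Hc: (cell N P Q r c); last by rewrite Z1 ?Z2 ?Hc.
have Hr : 1 <= r <= N by move: Hc; rewrite /cell => /andP[].
have Hle : forall p, p <= N -> (T1 r c <= p) = (T2 r c <= p).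
  by move=> p Hp; rewrite (ssyt_entry_le p HT1 Hc) (ssyt_entry_le p HT2 Hc) Hg // CsetI.
apply/eqP; rewrite eqn_leq.
have /andP[_ HB2] := B2 _ _ Hc; have /andP[_ HB1] := B1 _ _ Hc.
by rewrite Hle // leqnn -Hle // leqnn.
Qed.
Arguments ssyt_garr_inj {N P Q T1 T2}.

Lemma phiarrE m n g k r : 1 <= r -> k <= m + n ->
  phiarr m n g k (k%:Z + 1 - r%:Z)%R =
  if k < r then 0%R
  else if k < m then g 0 (0%:Z + 1 - (r + m - k)%N%:Z)%R
  else if m < r then 0%R
  else g (k - m) ((k - m)%N%:Z + 1 - r%:Z)%R.
Proof.
move=> Hr Hk; rewrite /phiarr.
case: (ltnP k r) => H1; first by rewrite ifT //; lia.
rewrite ifF; last by lia.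
case: (ltnP k m) => H2.
  by rewrite ifT; [congr g; lia | apply/andP; split; lia].
rewrite ifF; last by apply/negbTE/negP => /andP[]; lia.
case: (ltnP m r) => H3; first by rewrite ifT //; apply/andP; split; lia.
rewrite ifF; last by apply/negbTE/negP => /andP[]; lia.
by rewrite ifT; [congr g; lia | apply/andP; split; apply/andP; split; lia].
Qed.

(* Sum of the entries of x in the box [0, R) x [0, C); it decreases along
   the descent to the maximum. *)
Definition box_sum (R C : nat) (x : tab) : nat :=
  \sum_(r <- iota 0 R) \sum_(c <- iota 0 C) x r c.

Lemma box_sum_pred {R C x y r0 c0} : r0 < R -> c0 < C ->
  (forall r c, (r, c) <> (r0, c0) -> x r c = y r c) -> x r0 c0 = (y r0 c0).+1 ->
  box_sum R C x = (box_sum R C y).+1.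
Proof.
move=> HR HC Hoth Hx; rewrite /box_sum.
have inR : r0 \in iota 0 R by rewrite mem_iota; lia.
have inC : c0 \in iota 0 C by rewrite mem_iota; lia.
rewrite !(bigD1_seq r0 inR (iota_uniq 0 R)) !(bigD1_seq c0 inC (iota_uniq 0 C)) /=.
have Erow : \sum_(c <- iota 0 C | c != c0) x r0 c = \sum_(c <- iota 0 C | c != c0) y r0 c.
  by apply: eq_bigr => c /eqP Hc; apply: Hoth => -[].
have Erest : \sum_(r <- iota 0 R | r != r0) \sum_(c <- iota 0 C) x r c =
             \sum_(r <- iota 0 R | r != r0) \sum_(c <- iota 0 C) y r c.
  by apply: eq_bigr => r /eqP Hr; apply: eq_bigr => c _; apply: Hoth => -[].
by rewrite Erow Erest Hx !addSn.
Qed.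

Definition lower (x : tab) (r0 c0 : nat) : tab :=
  fun r c => if (r == r0) && (c == c0) then (x r c).-1 else x r c.

Lemma lower_other x r0 c0 r c : (r, c) <> (r0, c0) -> lower x r0 c0 r c = x r c.
Proof. by rewrite /lower; case: eqP => [->|//]; case: eqP => [->|]. Qed.

Section Descent.
Variables (N nc : nat) (P Q : nat -> nat).
Hypothesis HP : forall r, 1 <= r < N -> P r.+1 <= P r.

Local Notation L := (ssyt N nc P Q).
Local Notation E := (edge N nc P Q).
Local Notation cellL := (cell N P Q).

Lemma lower_ssyt {x M r0 c0} : L x -> L M -> cellL r0 c0 -> M r0 c0 < x r0 c0 ->
  (forall c, c < c0 -> cellL r0 c -> x r0 c <= M r0 c) ->
  (forall r, r < r0 -> cellL r c0 -> x r c0 <= M r c0) ->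
  L (lower x r0 c0).
Proof.
move=> [X0 X1 X2 X3] [M0 M1 M2 M3] Hc0 Hex Hleft Hup.
have Hy0 : lower x r0 c0 r0 c0 = (x r0 c0).-1 by rewrite /lower !eqxx.
have Hoth := lower_other x.
split.
- move=> r c Hc; case: (eqVneq (r, c) (r0, c0)) => [[Er Ec]|/eqP Hne].
    by subst; rewrite Hc0 in Hc.
  by rewrite Hoth //; exact: X0.
- move=> r c Hc; case: (eqVneq (r, c) (r0, c0)) => [[-> ->]|/eqP Hne].
    by rewrite Hy0; have := M1 _ _ Hc0; have := X1 _ _ Hc0; lia.
  by rewrite Hoth //; exact: X1.
- move=> r c c' Hc Hc' Hcc.
  case: (eqVneq (r, c) (r0, c0)) => [[Er Ec]|/eqP Hne];
  case: (eqVneq (r, c') (r0, c0)) => [[Er' Ec']|/eqP Hne'].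
  + by subst; rewrite Hy0.
  + by subst; rewrite Hy0 Hoth //; have := X2 _ _ _ Hc Hc' Hcc; lia.
  + subst; rewrite Hy0 Hoth //; have Hlt : c < c0 by case: ltngtP Hcc Hne => // -> _ [].
    by have := Hleft c Hlt Hc; have := M2 _ _ _ Hc Hc' Hcc; lia.
  + by rewrite !Hoth //; exact: X2.
- move=> r r' c Hc Hc' Hrr.
  case: (eqVneq (r, c) (r0, c0)) => [[Er Ec]|/eqP Hne];
  case: (eqVneq (r', c) (r0, c0)) => [[Er' Ec']|/eqP Hne'].
  + by subst; rewrite ltnn in Hrr.
  + by subst; rewrite Hy0 Hoth //; have := X3 _ _ _ Hc Hc' Hrr; lia.
  + subst; rewrite Hy0 Hoth //.
    by have := Hup r Hrr Hc; have := M3 _ _ _ Hc Hc' Hrr; have := X3 _ _ _ Hc Hc' Hrr; lia.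
  + by rewrite !Hoth //; exact: X3.
Qed.

(* If x differs from M, which is below it entrywise, then some cell carries
   an excess x > M with no excess to its left in its row nor above it in
   its column (take the first excess row, then its first excess cell). *)
Lemma excess_cell {x M} : L x -> L M -> x <> M -> tle N P Q x M ->
  exists r0 c0, [/\ cellL r0 c0, M r0 c0 < x r0 c0,
    forall c, c < c0 -> cellL r0 c -> x r0 c <= M r0 c &
    forall r, r < r0 -> cellL r c0 -> x r c0 <= M r c0].
Proof.
move=> [X0 _ _ _] [M0 _ _ _] Hne Hle.
have [r1 [c1 [Hc1 Hlt1]]] : exists r c, cellL r c /\ M r c < x r c.
  apply: NNPP => Hno; apply: Hne.
  apply: functional_extensionality => r; apply: functional_extensionality => c.
  case Hc: (cellL r c); last by rewrite X0 ?M0 ?Hc.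
  have := Hle r c Hc; case: (ltnP (M r c) (x r c)) => [Hlt _|Hge1 Hge2]; last by lia.
  by case: Hno; exists r, c.
pose excess r := has (fun c => cellL r c && (M r c < x r c)) (iota 0 (P r).+1).
have Hexcess : forall r c, cellL r c -> M r c < x r c -> excess r.
  move=> r c Hc Hlt; apply/hasP; exists c; last by rewrite Hc Hlt.
  by rewrite mem_iota; move: Hc; rewrite /cell; lia.
case: (ex_minnP (ex_intro _ r1 (Hexcess r1 c1 Hc1 Hlt1))) => r0 /hasP [c _ Hc] Hr0min.
case: (ex_minnP (ex_intro (fun c => cellL r0 c && (M r0 c < x r0 c)) c Hc)).
move=> c0 /andP[Hc0 Hlt0] Hc0min; exists r0, c0; split => //.
- move=> c' Hc' Hcell; rewrite leqNgt; apply/negP => Hlt.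
  by have := Hc0min c' (introT andP (conj Hcell Hlt)); lia.
- move=> r Hr Hcell; rewrite leqNgt; apply/negP => Hlt.
  by have := Hr0min r (Hexcess r c0 Hcell Hlt); lia.
Qed.

Lemma descent_step {x M} : L x -> L M -> x <> M -> tle N P Q x M ->
  exists y i, [/\ L y, E x i y & box_sum N.+1 (P 1).+1 x = (box_sum N.+1 (P 1).+1 y).+1].
Proof.
move=> Lx LM Hne Hle.
have [r0 [c0 [Hc0 Hlt0 Hleft Hup]]] := excess_cell Lx LM Hne Hle.
have Ly := lower_ssyt Lx LM Hc0 Hlt0 Hleft Hup.
have Hy0 : lower x r0 c0 r0 c0 = (x r0 c0).-1 by rewrite /lower !eqxx.
have Hpos : 0 < x r0 c0 by lia.
exists (lower x r0 c0), (x r0 c0).-1; split => //.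
- split => //; exists r0, c0; split => //; first by rewrite Hy0; lia.
  by move=> r c _ /lower_other.
- have Hr0 : r0 < N.+1 by move: Hc0; rewrite /cell; lia.
  have Hc0P : c0 < (P 1).+1.
    by have := nonincr_le HP 1 r0; move: Hc0; rewrite /cell; lia.
  apply: (box_sum_pred Hr0 Hc0P); last by rewrite Hy0; lia.
  by move=> r c /lower_other.
Qed.

Lemma jcomp_max M x : L M -> (forall y, L y -> tle N P Q y M) -> L x ->
  jcomp E predT M x.
Proof.
move=> LM HM Lx; move Hd: (box_sum N.+1 (P 1).+1 x) => d.
elim/ltn_ind: d x Hd Lx => d IH x Hd Lx.
case: (classic (x = M)) => [->|Hne]; first exact: comp_refl.
have [y [i [Ly Exy Hsum]]] := descent_step Lx LM Hne (HM x Lx).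
apply: (comp_step (u := y) (i := i)) => //; last by right.
by apply: (IH (box_sum N.+1 (P 1).+1 y) _ y erefl Ly); lia.
Qed.
End Descent.
Arguments jcomp_max {N nc P Q} HP {M x}.

Lemma edge_colour {N nc P Q S i T} : edge N nc P Q S i T -> 0 < i < nc.
Proof.
case=> [[_ S1 _ _] [_ T1 _ _] [r [c [Hc HST -> _]]]].
by have := S1 _ _ Hc; have := T1 _ _ Hc; lia.
Qed.

(* The embedding.  P' = Pext m P and Q' = Qnil are the outer and inner shapes
   of the big poset K; embed x fills the inner shape Q canonically and
   shifts the entries of x by m. *)
Definition Pext (m : nat) (P : nat -> nat) (r : nat) : nat := if r <= m then P r else 0.
Definition Qnil (r : nat) : nat := 0.

Definition embed (m n : nat) (P Q : nat -> nat) (x : tab) : tab := fun r c =>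
  if cell (m + n) (Pext m P) Qnil r c then (if c <= Q r then fill m Q r c else x r c + m)
  else 0.

Lemma cell_ext m n P r c : cell (m + n) (Pext m P) Qnil r c = (1 <= r <= m) && (0 < c <= P r).
Proof.
rewrite /cell /Pext /Qnil; case: (leqP r m) => H.
- by rewrite (_ : r <= m + n) ?andbT //; lia.
- by apply/idP/idP => /andP[]; lia.
Qed.

Lemma cell_ext_of_cell m n P Q r c : cell m P Q r c -> cell (m + n) (Pext m P) Qnil r c.
Proof. by rewrite cell_ext /cell; lia. Qed.
Arguments cell_ext_of_cell {m} n {P Q r c}.

Lemma cell_of_cell_ext m n P Q r c :
  cell (m + n) (Pext m P) Qnil r c -> Q r < c -> cell m P Q r c.
Proof. by rewrite cell_ext /cell; lia. Qed.
Arguments cell_of_cell_ext {m n P Q r c}.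

Section Embedding.
Variables (m n : nat) (P Q : nat -> nat).
Hypothesis HQ : forall r, 1 <= r < m -> Q r.+1 <= Q r.
Hypothesis HQP : forall r, 1 <= r <= m -> Q r <= P r.
Hypothesis HP : forall r, 1 <= r < m -> P r.+1 <= P r.

Local Notation L := (ssyt m n P Q).
Local Notation K := (ssyt (m + n) (m + n) (Pext m P) Qnil).
Local Notation cellK := (cell (m + n) (Pext m P) Qnil).
Local Notation F := (embed m n P Q).
Local Notation EL := (edge m n P Q).
Local Notation EK := (edge (m + n) (m + n) (Pext m P) Qnil).

Lemma embed_cell x r c : cell m P Q r c -> F x r c = x r c + m.
Proof.
move=> Hc; rewrite /embed (cell_ext_of_cell n Hc) ifF //.
by move: Hc; rewrite /cell; lia.
Qed.

Lemma embed_inner x r c : cellK r c -> c <= Q r -> F x r c = fill m Q r c.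
Proof. by rewrite /embed => -> ->. Qed.

Lemma fill_le_m {r c} : cellK r c -> fill m Q r c <= m.
Proof. by rewrite cell_ext => Hc; have := fill_bounds m Q r c; lia. Qed.

(* embed x is semistandard: the filling is, the shifted part is, and the
   filling lies below and to the left of entries which all exceed m. *)
Lemma embed_ssyt x : L x -> K (F x).
Proof.
case=> [X0 X1 X2 X3]; split.
- by move=> r c Hc; rewrite /embed (negbTE Hc).
- move=> r c Hc; case: (leqP c (Q r)) => Hq.
  + by rewrite embed_inner //; have := fill_bounds m Q r c; move: Hc; rewrite cell_ext; lia.
  + by rewrite embed_cell ?(cell_of_cell_ext Hc) //; have := X1 _ _ (cell_of_cell_ext Hc Hq); lia.
- move=> r c c' Hc Hc' Hcc; case: (leqP c (Q r)) => Hq; case: (leqP c' (Q r)) => Hq'.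
  + by rewrite !embed_inner //; apply: fill_mono.
  + rewrite embed_inner // embed_cell ?(cell_of_cell_ext Hc') //.
    by have := fill_le_m Hc; lia.
  + by lia.
  + rewrite !embed_cell ?(cell_of_cell_ext Hc) ?(cell_of_cell_ext Hc') // leq_add2r.
    by apply: X2 => //; [exact: cell_of_cell_ext Hc Hq | exact: cell_of_cell_ext Hc' Hq'].
- move=> r r' c Hc Hc' Hrr; have := Hc; have := Hc'; rewrite !cell_ext => Hr' Hr.
  case: (leqP c (Q r)) => Hq; case: (leqP c (Q r')) => Hq'.
  + by rewrite !embed_inner //; apply: (fill_col HQ); lia.
  + rewrite embed_inner // embed_cell ?(cell_of_cell_ext Hc') //.
    by have := fill_le_m Hc; have := X1 _ _ (cell_of_cell_ext Hc' Hq'); lia.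
  + by have := nonincr_le HQ r r' ltac:(lia) ltac:(lia) ltac:(lia); lia.
  + rewrite !embed_cell ?(cell_of_cell_ext Hc) ?(cell_of_cell_ext Hc') // ltn_add2r.
    by apply: X3 => //; [exact: cell_of_cell_ext Hc Hq | exact: cell_of_cell_ext Hc' Hq'].
Qed.

Lemma embed_inj {x y} : L x -> L y -> F x = F y -> x = y.
Proof.
case=> [X0 _ _ _] [Y0 _ _ _] H.
apply: functional_extensionality => r; apply: functional_extensionality => c.
case Hc: (cell m P Q r c); last by rewrite X0 ?Y0 ?Hc.
by have := f_equal (fun f => f r c) H; rewrite /= !embed_cell //; lia.
Qed.

Lemma embed_row_count x r k : 1 <= r <= m ->
  count (fun c => F x r c <= k) (iota 1 (P r)) =
  count (fun c => fill m Q r c <= k) (iota 1 (Q r)) +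
  count (fun c => x r c + m <= k) (iota (Q r).+1 (P r - Q r)).
Proof.
move=> Hr; have HQPr := HQP r Hr.
rewrite {1}(_ : P r = Q r + (P r - Q r)); last by lia.
rewrite iotaD count_cat add1n; congr (_ + _); apply: eq_in_count => c.
  by rewrite mem_iota => Hc; rewrite /= embed_inner //; [rewrite cell_ext|]; lia.
by rewrite mem_iota => Hc; rewrite /= embed_cell // /cell; lia.
Qed.

(* For a level
   k < m only filling entries count, and they reproduce Q shifted up by
   m - k rows (fill_le); for k >= m the whole filling counts and the x part
   contributes the entries <= k - m of x. *)
Lemma embed_garr x : L x -> forall k l, k <= m + n -> l \in Cset (m + n) k ->
  garr (m + n) (Pext m P) Qnil (F x) k l = phiarr m n (garr m P Q x) k l.
Proof.
case=> [_ X1 _ _] k l Hk /CsetP [r Hr ->].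
rewrite garrE phiarrE; [|lia|lia].
rewrite ifT; last by lia.
rewrite /Qnil subn0 add0n; case: (ltnP m r) => Hrm.
  rewrite /Pext ifF /=; last by lia.
  by case: ifP => // Hkr; rewrite ifF //; lia.
rewrite /Pext ifT // embed_row_count; last by lia.
case: (ltnP k m) => Hkm.
- rewrite [X in _ + X]count_iota_none; last by move=> t Ht; lia.
  rewrite (@eq_in_count _ _ (fun c => (r <= k) && (c <= Q (r + m - k)))); last first.
    by move=> c _; rewrite (fill_le HQ) //; lia.
  case: (ltnP k r) => Hkr /=; first by rewrite count_iota_none.
  rewrite count_iota_le; last by apply: (nonincr_le HQ); lia.
  rewrite garrE ifT; last by lia.
  rewrite count_iota_none ?addn0 // => t Ht.
  have Hcell : cell m P Q (r + m - k) t by rewrite /cell; have := HQP (r + m - k); lia.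
  by have := X1 _ _ Hcell; lia.
- rewrite count_iota_all; last by move=> t Ht /=; have := fill_bounds m Q r t; lia.
  rewrite (@eq_count _ _ (fun c => x r c <= k - m)); last by move=> c /=; lia.
  by rewrite ifF ?garrE ?ifT; [congr Posz; lia | lia | lia].
Qed.

Definition embedded (w : tab) : Prop :=
  forall r c, cellK r c -> if c <= Q r then w r c = fill m Q r c else m < w r c.

Definition in_image (w : tab) : Prop := exists y, L y /\ w = F y.

Lemma in_imageP {w} : K w -> in_image w <-> embedded w.
Proof.
case=> [W0 W1 W2 W3]; split.
  case=> x [[_ X1 _ _] ->] r c Hc; case: ifP => Hq; first exact: embed_inner.
  by rewrite embed_cell ?(cell_of_cell_ext Hc) //; have := X1 _ _ (cell_of_cell_ext Hc _); lia.
move=> Hw; pose y := fun r c => if cell m P Q r c then w r c - m else 0.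
have Hgt : forall r c, cell m P Q r c -> m < w r c.
  move=> r c Hc; have := Hw r c (cell_ext_of_cell n Hc); rewrite ifF //.
  by move: Hc; rewrite /cell; lia.
exists y; split.
- split=> [r c /negbTE Hc|r c Hc|r c c' Hc Hc' Hcc|r r' c Hc Hc' Hrr]; rewrite /y ?Hc ?Hc' //.
  + by have := Hgt _ _ Hc; have := W1 _ _ (cell_ext_of_cell n Hc); move: Hc; rewrite /cell; lia.
  + by have := W2 _ _ _ (cell_ext_of_cell n Hc) (cell_ext_of_cell n Hc') Hcc; lia.
  + have := W3 _ _ _ (cell_ext_of_cell n Hc) (cell_ext_of_cell n Hc') Hrr.
    by have := Hgt _ _ Hc; lia.
- apply: functional_extensionality => r; apply: functional_extensionality => c.
  rewrite /embed; case Hc: (cellK r c); last by rewrite W0 ?Hc.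
  have := Hw r c Hc; case: ifP => Hq // Hgt'.
  by rewrite /y (cell_of_cell_ext Hc) //; lia.
Qed.

(* Edges of L are exactly the edges of K between images, with colour
   shifted by m: the inner filling never changes. *)
Lemma edge_embed S T i : L S -> L T -> (EL S i T <-> EK (F S) (i + m) (F T)).
Proof.
move=> LS LT; split.
- case=> _ _ [r [c [Hc HST Hi Hoth]]]; split; try exact: embed_ssyt.
  exists r, c; split.
  + exact: (cell_ext_of_cell n Hc).
  + by rewrite !embed_cell // HST; lia.
  + by rewrite embed_cell // Hi.
  + move=> r' c' Hc' Hne; rewrite /embed Hc'; case: ifP => // Hq.
    by rewrite Hoth //; apply: cell_of_cell_ext => //; lia.
- case=> _ _ [r [c [Hc HST Hi Hoth]]]; split => //.
  have Hq : Q r < c.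
    by rewrite ltnNge; apply/negP => Hq; move: HST; rewrite !embed_inner //; lia.
  have HL := cell_of_cell_ext Hc Hq.
  exists r, c; split => //.
  + by move: HST; rewrite !embed_cell //; lia.
  + by move: Hi; rewrite !embed_cell //; lia.
  + move=> r' c' Hc' Hne; have := Hoth r' c' (cell_ext_of_cell n Hc') Hne.
    by rewrite !embed_cell //; lia.
Qed.

(* An edge of K of colour > m changes an entry > m into another entry > m,
   hence it preserves the embedded shape in both directions. *)
Lemma high_edge_image {u col v} : m < col -> EK u col v -> (in_image u <-> in_image v).
Proof.
move=> Hcol [Ku Kv [r0 [c0 [Hc0 Huv Hv0 Hoth]]]].
rewrite (in_imageP Ku) (in_imageP Kv).
have Hsame : forall r c, (r, c) <> (r0, c0) -> u r c = v r c.
  move=> r c Hne; case Hc: (cellK r c); first exact: Hoth.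
  by case: Ku Kv => [U0 _ _ _] [V0 _ _ _]; rewrite U0 ?V0 ?Hc.
have Hhigh : forall w, embedded w -> m < w r0 c0 -> Q r0 < c0.
  move=> w Hw; have := Hw r0 c0 Hc0; case: (leqP c0 (Q r0)) => // _ ->.
  by have := fill_le_m Hc0; lia.
have Htransfer : forall w w', embedded w -> m < w r0 c0 -> m < w' r0 c0 ->
    (forall r c, (r, c) <> (r0, c0) -> w r c = w' r c) -> embedded w'.
  move=> w w' Hw Hm Hm' Heq r c Hc.
  case: (eqVneq (r, c) (r0, c0)) => [[-> ->]|/eqP Hne].
    by rewrite leqNgt (Hhigh w Hw Hm).
  by rewrite -Heq //; exact: Hw.
split=> Hw; [apply: (Htransfer u) | apply: (Htransfer v)] => //; try lia.
by move=> r c /Hsame.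
Qed.

Lemma dpath_image {c k a b} : m < c -> dpath EK c k a b -> (in_image a <-> in_image b).
Proof.
move=> Hc; elim=> // {}k a0 b0 c0 _ IH He.
by rewrite IH; exact: high_edge_image He.
Qed.

Lemma jcomp_image {J : pred nat} {t a} :
  (forall j, J j -> m < j) -> jcomp EK J t a -> in_image t -> in_image a.
Proof.
move=> HJ; elim=> // u v j _ IH Jj He /IH Hu; have Hj := HJ _ Jj.
by case: He => He; [rewrite -(high_edge_image Hj He) | rewrite (high_edge_image Hj He)].
Qed.

Lemma dpath_embed {i k x y} : 0 < i -> L x -> L y ->
  dpath EK (i + m) k (F x) (F y) <-> dpath EL i k x y.
Proof.
move=> Hi Lx Ly; have Hm : m < i + m by lia.
split; last first.
  elim=> [a0|{}k a0 b0 c0 _ IH He]; first by constructor.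
  by apply: (dpathS IH); case: (He) => Lb Lc _; apply/edge_embed.
move Ex: (F x) => a; move Ey: (F y) => b Hp.
elim: Hp Ex y Ly Ey => [a0|{}k a0 b0 c0 Hp IH He] Ex y Ly Ey.
  by rewrite -Ey in Ex; rewrite (embed_inj Lx Ly Ex); constructor.
have [z [Lz Ez]] : in_image b0 by apply/(high_edge_image Hm He); exists y.
apply: (dpathS (IH Ex z Lz (esym Ez))); apply/edge_embed => //.
by rewrite -Ez Ey.
Qed.

Lemma jcomp_embed {i x z} : 0 < i -> L x -> L z ->
  jcomp EK (pred1 (i + m)) (F x) (F z) <-> jcomp EL (pred1 i) x z.
Proof.
move=> Hi Lx Lz; have Hm : m < i + m by lia.
split; last first.
  elim=> [|u v j _ IH Jj He]; first by constructor.
  move/eqP: Jj => Ej; subst j; apply: (comp_step (i := i + m) IH); first by rewrite /= eqxx.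
  by case: He => He; case: (He) => L1 L2 _; [left|right]; apply/edge_embed.
move Ez: (F z) => a Hj.
elim: Hj z Lz Ez => [|u v j _ IH Jj He] z Lz Ez.
  by rewrite (embed_inj Lx Lz (esym Ez)); constructor.
move/eqP: Jj => Ej; subst j.
have Hv : in_image v by exists z.
have [w [Lw Ew]] : in_image u.
  by case: He => He; [rewrite (high_edge_image Hm He) | rewrite -(high_edge_image Hm He)].
apply: (comp_step (i := i) (IH w Lw (esym Ew))); first by rewrite /= eqxx.
by rewrite -Ez Ew in He; case: He => He; [left|right]; apply/edge_embed.
Qed.

Lemma dpath_L {i k a b} : dpath EL i k a b -> (L a <-> L b).
Proof. by elim=> // {}k a0 b0 c0 _ -> [? ? _]. Qed.

Lemma jcomp_L {J x a} : jcomp EL J x a -> L x -> L a.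
Proof. by elim=> // u v j _ IH _ [[_ ? _] | [? _ _]] /IH. Qed.

Lemma rho_embed i x : 0 < i -> L x -> rho EK (i + m) (F x) = rho EL i x.
Proof.
move=> Hi Lx; have Hm : m < i + m by lia.
rewrite /rho; congr natmax.
apply: functional_extensionality => k; apply: propositional_extensionality; split.
- case=> a Hp; have [w [Lw Ew]] : in_image a by apply/(dpath_image Hm Hp); exists x.
  by exists w; apply/(dpath_embed Hi Lw Lx); rewrite -Ew.
- case=> a Hp; exists (F a); apply/dpath_embed => //.
  by apply/(dpath_L Hp).
Qed.

Lemma len_embed i x : 0 < i -> L x -> len EK (i + m) (F x) = len EL i x.
Proof.
move=> Hi Lx; have Hm : m < i + m by lia.
rewrite /len; congr natmax.
apply: functional_extensionality => k; apply: propositional_extensionality; split.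
- case=> a [b [Hj Hp]].
  have [w [Lw Ew]] : in_image a.
    by apply: (jcomp_image _ Hj) => [j /eqP ->|]; last exists x.
  have [z [Lz Ez]] : in_image b by apply/(dpath_image Hm Hp); exists w.
  exists w, z; split; first by apply/(jcomp_embed Hi Lx Lw); rewrite -Ew.
  by apply/(dpath_embed Hi Lw Lz); rewrite -Ew -Ez.
- case=> a [b [Hj Hp]]; have La := jcomp_L Hj Lx; have Lb := (dpath_L Hp).1 La.
  exists (F a), (F b); split; first exact/jcomp_embed.
  exact/dpath_embed.
Qed.

Lemma weight_embed i x : 0 < i -> L x -> weight EK (i + m) (F x) = weight EL i x.
Proof. by move=> Hi Lx; rewrite /weight rho_embed ?len_embed. Qed.

Lemma jcomp_embed_high x y : jcomp EL predT x y -> L x ->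
  jcomp EK (fun k => m.+1 <= k <= m + n - 1) (F x) (F y).
Proof.
elim=> [|u v i _ IH _ He] Lx; first exact: comp_refl.
have Hi : 0 < i < n by case: He => /edge_colour.
apply: (comp_step (u := F u) (i := i + m) (IH Lx)); first by apply/andP; lia.
by case: He => He; case: (He) => L1 L2 _; [left|right]; apply/edge_embed.
Qed.

Lemma image_component M : L M -> (forall x, L x -> tle m P Q x M) ->
  forall y, in_image y <-> jcomp EK (fun k => m.+1 <= k <= m + n - 1) (F M) y.
Proof.
move=> LM HM y; split.
  by case=> x [Lx ->]; apply: jcomp_embed_high => //; exact: (jcomp_max HP LM HM Lx).
by move=> Hj; apply: (jcomp_image _ Hj) => [k /andP[Hk _]|]; last exists M.
Qed.
End Embedding.
Arguments embed_ssyt {m n P Q} HQ {x}.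
Arguments embed_garr {m n P Q} HQ HQP {x}.
Arguments embed_inj {m n P Q x y}.
Arguments edge_embed {m n P Q} HQ {S T i}.
Arguments image_component {m n P Q} HQ HP {M}.
Arguments weight_embed {m n P Q} HQ {i x}.

Definition phi_related (m n : nat) (g g' : nat -> int -> int) : Prop :=
  forall k l, k <= m + n -> l \in Cset (m + n) k -> g' k l = phiarr m n g k l.

Lemma Cset_shift m n i : Cset (m + n) (i + m) =
  [seq (k + m%:Z)%R | k <- Cset m i] ++ [seq (i%:Z + m%:Z - t%:Z)%R | t <- iota m n].
Proof.
rewrite /Cset iotaD add0n map_cat -map_comp; congr (_ ++ _); apply: eq_map => t /=; lia.
Qed.

Section Coefficients.
Local Open Scope ring_scope.
Variables (m n : nat) (g g' : nat -> int -> int).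
Hypothesis Hg' : phi_related m n g g'.

Lemma gext_shift i k : (i <= n)%N -> k \in Cset m i -> g' (i + m)%N (k + m%:Z) = g i k.
Proof.
move=> Hi Hk; have [r Hr Ek] := CsetP Hk.
have Hmem : k + m%:Z \in Cset (m + n) (i + m).
  by rewrite Cset_shift mem_cat; apply/orP; left; apply: map_f.
rewrite Hg' //; last by lia.
have -> : k + m%:Z = (i + m)%N%:Z + 1 - r%:Z by lia.
by rewrite phiarrE; [rewrite ifF ?ifF ?ifF; [congr g; lia|lia|lia|lia] | lia | lia].
Qed.

Lemma gext_pad i t : (i <= n)%N -> (m <= t < m + n)%N ->
  g' (i + m)%N (i%:Z + m%:Z - t%:Z) = 0.
Proof.
move=> Hi Ht; have Hmem : i%:Z + m%:Z - t%:Z \in Cset (m + n) (i + m).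
  by rewrite Cset_shift mem_cat; apply/orP; right; apply: map_f; rewrite mem_iota.
rewrite Hg' //; last by lia.
have -> : i%:Z + m%:Z - t%:Z = (i + m)%N%:Z + 1 - t.+1%:Z by lia.
by rewrite phiarrE; [case: ifP => // _; rewrite ifF ?ifT //; lia | lia | lia].
Qed.

Lemma prod_row_embed (F : int -> rat) (a j0 : int) i' : (i' <= n)%N ->
  \prod_(k <- Cset (m + n) (i' + m)) F (a - g' (i' + m)%N k + (j0 + m%:Z) - k) =
  \prod_(k <- Cset m i') F (a - g i' k + j0 - k) *
  \prod_(t <- iota m n) F (a + j0 - i'%:Z + t%:Z).
Proof.
move=> Hi; rewrite Cset_shift big_cat; congr (_ * _); rewrite big_map.
all: apply: eq_big_seq => t Ht.
  by rewrite gext_shift //; apply: f_equal; lia.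
by rewrite mem_iota in Ht; rewrite gext_pad //; apply: f_equal; lia.
Qed.

Lemma prod_row_embed_neq (F : int -> rat) (a j0 : int) i' :
  (i' <= n)%N -> j0 \in Cset m i' ->
  \prod_(k <- Cset (m + n) (i' + m) | k != j0 + m%:Z) F (a - g' (i' + m)%N k + (j0 + m%:Z) - k) =
  \prod_(k <- Cset m i' | k != j0) F (a - g i' k + j0 - k) *
  \prod_(t <- iota m n) F (a + j0 - i'%:Z + t%:Z).
Proof.
move=> Hi Hj0; have [r0 Hr0 Ej0] := CsetP Hj0.
rewrite Cset_shift big_cat; congr (_ * _); rewrite big_map.
  rewrite big_seq_cond [RHS]big_seq_cond; apply: eq_big => [k|k /andP[Hk _]].
    by rewrite (inj_eq (addIr _)).
  by rewrite gext_shift //; apply: f_equal; lia.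
rewrite big_seq_cond [RHS]big_seq; apply: eq_big => [t|t /andP[Ht _]].
  case Ht: (t \in iota m n) => //=; rewrite mem_iota in Ht; apply/eqP; lia.
by rewrite mem_iota in Ht; rewrite gext_pad //; apply: f_equal; lia.
Qed.

Lemma cancel_common (a b e : rat) : e != 0 -> (a * e) / (b * e) = a / b.
Proof. by move=> He; rewrite invfM mulrACA divff // mulr1. Qed.

(* At an edge position (i, j) of g, the coefficients of phi(g) at (i+m, j+m)
   agree with those of g: the n padding factors in numerator and denominator
   coincide and are nonzero. *)
Lemma coef_embed i j : (0 < i < n)%N -> j \in Cset m i -> 0 < g i j ->
  Xcoef (m + n) g' (i + m) (j + m%:Z) = Xcoef m g i j /\
  Ycoef (m + n) g' (i + m) (j + m%:Z) = Ycoef m g i j.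
Proof.
move=> Hi Hj Hpos; have [r0 Hr0 Ej] := CsetP Hj.
rewrite /Xcoef /Ycoef gext_shift //; last by lia.
have -> : (i + m).-1 = (i.-1 + m)%N by lia.
rewrite -addSn (prod_row_embed (fun z => z%:~R)); last by lia.
rewrite (prod_row_embed (fun z => (z - 1)%:~R)); last by lia.
rewrite (prod_row_embed_neq (fun z => z%:~R)) //; last by lia.
rewrite (prod_row_embed_neq (fun z => (z - 1)%:~R)) //; last by lia.
set E1 := \prod_(t <- iota m n) ((g i j + j - i%:Z + t%:Z - 1)%:~R : rat).
set E2 := \prod_(t <- iota m n) ((g i j + j - i%:Z + t%:Z)%:~R : rat).
have -> : \prod_(t <- iota m n) ((g i j + j - i.+1%:Z + t%:Z)%:~R : rat) = E1.
  by apply: eq_bigr => t _; congr (_%:~R); lia.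
have -> : \prod_(t <- iota m n) ((g i j + j - i.-1%:Z + t%:Z - 1)%:~R : rat) = E2.
  by apply: eq_bigr => t _; congr (_%:~R); lia.
have [E1_neq0 E2_neq0] : E1 != 0 /\ E2 != 0.
  by split; rewrite prodf_seq_neq0; apply/allP => t; rewrite mem_iota => Ht /=;
    rewrite intr_eq0; lia.
by rewrite -mulNr !cancel_common // mulNr.
Qed.
End Coefficients.
Arguments gext_shift {m n g g'} Hg' {i k}.
Arguments gext_pad {m n g g'} Hg' {i t}.
Arguments coef_embed {m n g g'} Hg' {i j}.

(* The differing position of an edge of phi(g) is the differing position of
   the corresponding edge of g, shifted by m (in the padding both arrays
   vanish, so they cannot differ there). *)
Lemma diffpos_embed {m n gS gT gS' gT' i j j'} : (i <= n)%N ->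
  phi_related m n gS gS' -> phi_related m n gT gT' ->
  diffpos m gS gT i j -> diffpos (m + n) gS' gT' (i + m) j' -> j' = (j + m%:Z)%R.
Proof.
move=> Hi HS HT [_ _ Hsame] [Hj' Hinc' _].
move: Hj' Hinc'; rewrite Cset_shift mem_cat => /orP[/mapP[k Hk ->]|/mapP[t Ht ->]].
  rewrite (gext_shift HS Hi Hk) (gext_shift HT Hi Hk) => Hinc.
  case: (eqVneq k j) => [-> //|Hne].
  have Hik : (i, k) <> (i, j) by case=> Ek; rewrite Ek eqxx in Hne.
  by have := Hsame i k Hik; rewrite Hinc; lia.
rewrite mem_iota in Ht; rewrite (gext_pad HS Hi Ht) (gext_pad HT Hi Ht); lia.
Qed.

Theorem proposition6p5 (m n : nat) (P Q : nat -> nat)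
  (Hn : 2 <= n) (Hnm : n <= m)
  (HP : forall r, 1 <= r < m -> P r.+1 <= P r)
  (HQ : forall r, 1 <= r < m -> Q r.+1 <= Q r)
  (HQP : forall r, 1 <= r <= m -> Q r <= P r)
  (Hcol : forall c, count (fun r => cell m P Q r c) (iota 1 m) <= n) :
  let L := ssyt m n P Q in
  let P' := fun r => if r <= m then P r else 0 in
  let Q' := fun _ : nat => 0 in
  let K := ssyt (m + n) (m + n) P' Q' in
  let EL := edge m n P Q in
  let EK := edge (m + n) (m + n) P' Q' in
  let g := garr m P Q in
  let g' := garr (m + n) P' Q' in
  (forall x, L x -> exists y, K y /\
     forall k l, k <= m + n -> l \in Cset (m + n) k -> g' y k l = phiarr m n (g x) k l) /\
  forall phi : tab -> tab,
    (forall x, L x -> K (phi x) /\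
       forall k l, k <= m + n -> l \in Cset (m + n) k -> g' (phi x) k l = phiarr m n (g x) k l) ->
    [/\ forall x y, L x -> L y -> phi x = phi y -> x = y,
        forall S T i, L S -> L T -> (EL S i T <-> EK (phi S) (i + m) (phi T)),
        forall M, L M -> (forall x, L x -> tle m P Q x M) ->
          forall y, (exists x, L x /\ y = phi x) <->
                    jcomp EK (fun k => m.+1 <= k <= m + n - 1) (phi M) y,
        forall x i, L x -> 1 <= i <= n - 1 -> weight EK (i + m) (phi x) = weight EL i x
      & forall S T i j j', EL S i T -> diffpos m (g S) (g T) i j ->
          diffpos (m + n) (g' (phi S)) (g' (phi T)) (i + m) j' ->
          Xcoef (m + n) (g' (phi T)) (i + m) j' = Xcoef m (g T) i j /\
          Ycoef (m + n) (g' (phi T)) (i + m) j' = Ycoef m (g T) i j].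
Proof.
move=> L P' Q' K EL EK g g'; split.
  by move=> x Lx; exists (embed m n P Q x); split; [exact: embed_ssyt | exact: embed_garr].
move=> phi Hphi.
(* phi agrees with embed, since both produce the same GT arrays. *)
have phiE : forall x, L x -> phi x = embed m n P Q x.
  move=> x Lx; have [Kx Hgx] := Hphi x Lx.
  apply: (ssyt_garr_inj Kx (embed_ssyt HQ Lx)) => k l Hk Hl.
  by rewrite (embed_garr HQ HQP Lx) //; exact: Hgx.
split.
- by move=> x y Lx Ly; rewrite !phiE //; exact: embed_inj.
- by move=> S T i LS LT; rewrite !phiE //; exact: edge_embed.
- move=> M LM HM y; rewrite phiE //; apply: iff_trans (image_component HQ HP LM HM y).
  by split=> -[x [Lx ->]]; exists x; rewrite phiE.
- by move=> x i Lx Hi; rewrite phiE //; apply: weight_embed => //; lia.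
- move=> S T i j j' HE HdL HdK; have [LS LT _] := HE; have Hi := edge_colour HE.
  have Ej' : j' = (j + m%:Z)%R.
    by apply: (diffpos_embed _ (Hphi S LS).2 (Hphi T LT).2 HdL HdK); lia.
  have [Hj Hinc _] := HdL.
  rewrite Ej'; apply: (coef_embed (Hphi T LT).2) => //.
  by rewrite Hinc; have : (0 <= g S i j)%R := garr_ge0 m P Q S i j; lia.
Qed.
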